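(* Let $\mathcal{H}$ be an infinite-dimensional separable Hilbert space with orthonormal bases $\{e_n\}$, $\{f_n\}$, $\mathcal{D}_e=\mathrm{span}\{e_n\}$, $\mathcal{D}_f=\mathrm{span}\{f_n\}$, $\mathcal{D}_e^2=\mathrm{span}\{|e_k\rangle\langle e_\ell|\}$. Let $\mathcal{Q}$ be a completely positive map from $\mathcal{D}_e^2$ into sesquilinear forms on $\mathcal{D}_f$, represented as $\mathcal{Q}(\rho)=\sum_\alpha K_\alpha\rho K_\alpha^\dagger$ by a countable family of generalized operators $K_\alpha$. If $\mathcal{Q}$ is trace preserving (each $\mathcal{Q}(\rho)$ is given by a trace class operator with trace equal to $\mathrm{Tr}\,\rho$), then each $K_\alpha$ extends to a bounded operator in $\mathcal{B}(\mathcal{H})$, and $K_\alpha^\dagger=K_\alpha^*$.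
   Context: A generalized operator $K$ is a linear map from $\mathcal{D}_e$ into the conjugate algebraic dual of $\mathcal{D}_f$; write $\langle f|K|e\rangle$ for the value of $Ke$ at $f\in\mathcal{D}_f$, and $\langle e|K^\dagger|f\rangle=\langle f|K|e\rangle^*$. The representation $\mathcal{Q}(\rho)=\sum_\alpha K_\alpha\rho K_\alpha^\dagger$ means $\langle g|\mathcal{Q}(|\phi\rangle\langle\phi'|)|f\rangle=\sum_\alpha\langle g|K_\alpha|\phi\rangle\langle f|K_\alpha|\phi'\rangle^*$ for $\phi,\phi'\in\mathcal{D}_e$, $f,g\in\mathcal{D}_f$. Complete positivity: $\sum_{k,\ell}\langle\psi_k|\mathcal{Q}(|\phi_k\rangle\langle\phi_\ell|)|\psi_\ell\rangle\ge0$ for all finite families $\phi_k\in\mathcal{D}_e$, $\psi_k\in\mathcal{D}_f$. $K_\alpha^*$ denotes the Hilbert space adjoint of the bounded extension. *)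

(* Complex scalars: R[i] (real_closed
   complex numbers) over an abstract R : realType.  The separable
   infinite-dimensional Hilbert space is modelled concretely as l^2(N; C). *)
From HB Require Import structures.
From mathcomp Require Import all_boot all_order all_algebra.
From mathcomp Require Import complex.
From mathcomp Require Import classical_sets boolp reals topology normedtype sequences.
Import Order.TTheory GRing.Theory Num.Theory.
Import numFieldNormedType.Exports.

Set Implicit Arguments.
Unset Strict Implicit.
Unset Printing Implicit Defensive.

Local Open Scope ring_scope.
Local Open Scope complex_scope.

(* The normed (hence topological) structure of a numField, copied onto R[i],
   so that limits of complex sequences/series make sense. *)
Section ComplexNormed.
Variable R : realType.
HB.instance Definition _ := NormedModule.copy R[i] (R[i] : numClosedFieldType)^o.
End ComplexNormed.

Section Hilbert.
Variable R : realType.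
Local Notation C := (R[i]).

Definition vec := nat -> C.
Definition l2 (x : vec) : Prop := cvgn (series (fun n => `|x n| ^+ 2)).

Definition inner (x y : vec) : C := limn (series (fun n => (x n)^* * y n)).

Definition op := vec -> vec.

Definition is_bounded (B : op) : Prop :=
  (forall x, l2 x -> l2 (B x)) /\
  (forall (x y : vec) (z : C), l2 x -> l2 y ->
      B (fun n => x n + z * y n) = (fun n => B x n + z * B y n)) /\
  (exists M : R, forall x, l2 x -> inner (B x) (B x) <= M%:C * inner x x).

Definition is_adjoint (B Bs : op) : Prop :=
  is_bounded Bs /\
  (forall x y, l2 x -> l2 y -> inner (Bs y) x = inner y (B x)).

Definition is_ONB (u : nat -> vec) : Prop :=
  (forall n, l2 (u n)) /\
  (forall m n, inner (u m) (u n) = (m == n)%:R) /\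
  (forall x, l2 x -> (forall n, inner (u n) x = 0) -> x = (fun _ => 0)).

Definition is_positive (P : op) : Prop :=
  forall x, l2 x -> 0 <= inner x (P x).

(* T is trace class: T bounded and Tr |T| < oo, where |T| = P is the positive
   square root of T^* T, the trace being computed in the orthonormal basis u *)
Definition trace_class (u : nat -> vec) (T : op) : Prop :=
  is_bounded T /\
  exists Ts P : op, is_adjoint T Ts /\ is_bounded P /\ is_positive P /\
    (forall x, l2 x -> P (P x) = Ts (T x)) /\
    cvgn (series (fun n => inner (u n) (P (u n)))).

Definition trace (u : nat -> vec) (T : op) : C :=
  limn (series (fun n => inner (u n) (T (u n)))).

(* An element of D_e = span{e_n} (resp. D_f) is given by a finite
   coefficient list a, standing for sum_n a`_n e_n.  A generalized operator
   K : D_e -> (D_f)^x (conjugate algebraic dual) is determined by, and freely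
   given by, its matrix K m n = <f_m|K|e_n>; likewise a sesquilinear form F on
   D_f is given by its matrix F m n = <f_m|F|f_n>.  [sandw F g a] is
   <g|F|a> = sum_{m,n} conj(g_m) F m n a_n. *)
Definition mat := nat -> nat -> C.

Definition sandw (F : mat) (g a : seq C) : C :=
  \sum_(m < size g) \sum_(n < size a) ((g`_m)^* * F m n * a`_n).

(* coefficients of |phi><phi'| in the basis |e_k><e_l| of D_e^2 *)
Definition rank1 (a b : seq C) : mat := fun k l => a`_k * (b`_l)^*.

(* c is the coefficient matrix of an element sum_{k,l<N} c k l |e_k><e_l| of D_e^2 *)
Definition supported (N : nat) (c : mat) : Prop :=
  forall k l, (N <= k)%N \/ (N <= l)%N -> c k l = 0.

End Hilbert.

(* Testing trace preservation on [|c><c|] for finitely supported [c] gives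
   [sum_alpha |K_alpha c|^2 = Tr Q(|c><c|) = |c|^2], so every [K_alpha] is a
   contraction on [D_e].  Its matrix [<f_m|K_alpha|e_n>] therefore defines a
   bounded operator [x |-> sum_m (K_alpha <e|x>)_m f_m] on [H]; the conjugate
   transpose matrix is again bounded (by weighted AM-GM) and defines the
   Hilbert space adjoint, which agrees with [K_alpha^dagger] on the bases. *)

From HB Require Import structures.
From mathcomp Require Import all_boot all_order all_algebra.
From mathcomp Require Import complex.
From mathcomp Require Import classical_sets boolp reals topology normedtype sequences.
From mathcomp Require Import ring lra.
Import Order.TTheory GRing.Theory Num.Theory.
Import numFieldNormedType.Exports.
Local Open Scope ring_scope.
Local Open Scope complex_scope.
Local Open Scope classical_set_scope.
Set Implicit Arguments.
Unset Strict Implicit.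
Unset Printing Implicit Defensive.

Section ComplexScalars.
Variable R : realType.
Local Notation C := R[i].
Local Notation re := (@complex.Re R).
Local Notation im := (@complex.Im R).

(* Real-valued stand-ins for [|z|^2] and, up to a factor [sqrt 2], for [|z|]. *)
Definition abs2 (z : C) : R := re z ^+ 2 + im z ^+ 2.
Definition abs1 (z : C) : R := `|re z| + `|im z|.

Lemma abs2_ge0 z : 0 <= abs2 z. Proof. by rewrite /abs2 addr_ge0 ?sqr_ge0. Qed.
Lemma abs1_ge0 z : 0 <= abs1 z. Proof. by rewrite /abs1 addr_ge0. Qed.

Lemma abs2_real (x : R) : abs2 x%:C = x ^+ 2.
Proof. by rewrite /abs2 /= expr0n /= addr0. Qed.

Lemma abs2_0 : abs2 0 = 0. Proof. by rewrite abs2_real expr0n. Qed.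

Lemma abs2_bool (b : bool) : abs2 b%:R = b%:R.
Proof. by case: b; rewrite /abs2 /= ?expr0n ?expr1n /= ?addr0. Qed.

Lemma abs2_conj z : abs2 z^* = abs2 z.
Proof. by case: z => a b; rewrite /abs2 /=; ring. Qed.

Lemma abs2M x y : abs2 (x * y) = abs2 x * abs2 y.
Proof. by case: x y => a b [c d]; rewrite /abs2 /=; ring. Qed.

Lemma conjM_abs2 z : z^* * z = (abs2 z)%:C.
Proof. case: z => a b; rewrite /abs2 /= /conjc; simpc; congr (_ +i* _); ring. Qed.

Lemma sqr_norm_abs2 z : `|z| ^+ 2 = (abs2 z)%:C.
Proof. by rewrite -add_Re2_Im2. Qed.

Lemma abs2_eq0 z : abs2 z = 0 -> z = 0.
Proof.
case: z => a b; rewrite /abs2 /= => h.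
have /eqP : a ^+ 2 = 0 by apply/eqP; rewrite eq_le sqr_ge0 andbT; nra.
have /eqP : b ^+ 2 = 0 by apply/eqP; rewrite eq_le sqr_ge0 andbT; nra.
by rewrite !sqrf_eq0 => /eqP -> /eqP ->.
Qed.

Lemma abs2D_le x y : abs2 (x + y) <= 2 * (abs2 x + abs2 y).
Proof.
case: x y => a b [c d]; rewrite /abs2 /=.
by have := sqr_ge0 (a - c); have := sqr_ge0 (b - d); nra.
Qed.

Lemma reD x y : re (x + y) = re x + re y. Proof. by case: x y => ? ? [? ?]. Qed.
Lemma imD x y : im (x + y) = im x + im y. Proof. by case: x y => ? ? [? ?]. Qed.
Lemma reB x y : re (x - y) = re x - re y. Proof. by case: x y => ? ? [? ?]. Qed.
Lemma imB x y : im (x - y) = im x - im y. Proof. by case: x y => ? ? [? ?]. Qed.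

Lemma re_sum (F : nat -> C) n : re (\sum_(0 <= k < n) F k) = \sum_(0 <= k < n) re (F k).
Proof. elim: n => [|n IH]; first by rewrite !big_geq. by rewrite !big_nat_recr //= reD IH. Qed.
Lemma im_sum (F : nat -> C) n : im (\sum_(0 <= k < n) F k) = \sum_(0 <= k < n) im (F k).
Proof. elim: n => [|n IH]; first by rewrite !big_geq. by rewrite !big_nat_recr //= imD IH. Qed.

Lemma norm_re_le z : (`|re z|)%:C <= `|z|.
Proof. by rewrite normc_def lecR -sqrtr_sqr ler_wsqrtr // lerDl sqr_ge0. Qed.
Lemma norm_im_le z : (`|im z|)%:C <= `|z|.
Proof. by rewrite normc_def lecR -sqrtr_sqr ler_wsqrtr // lerDr sqr_ge0. Qed.

Lemma re_le_abs1 z : re z <= abs1 z.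
Proof. by apply: le_trans (ler_norm _) _; rewrite /abs1 lerDl. Qed.

Lemma abs1_conj z : abs1 z^* = abs1 z.
Proof. by case: z => a b; rewrite /abs1 /= normrN. Qed.

Lemma abs1D_le x y : abs1 (x + y) <= abs1 x + abs1 y.
Proof.
rewrite /abs1 reD imD.
by have := ler_normD (re x) (re y); have := ler_normD (im x) (im y); lra.
Qed.

Lemma abs1_sum_le (F : nat -> C) n :
  abs1 (\sum_(0 <= k < n) F k) <= \sum_(0 <= k < n) abs1 (F k).
Proof.
elim: n => [|n IH]; first by rewrite !big_geq // /abs1 /= normr0 addr0.
by rewrite !big_nat_recr //=; apply: le_trans (abs1D_le _ _) _; lra.
Qed.

(* The weighted AM-GM inequality [2 t |p| <= t^2 |x|^2 + |y|^2], applied to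
   both the real and the imaginary part of [p = conj x * y]. *)
Lemma abs1_conjM_le x y t : 0 <= t -> t * abs1 (x^* * y) <= t ^+ 2 * abs2 x + abs2 y.
Proof.
case: x y => a b [c d] t0; rewrite /abs1 /abs2 /=.
have -> : a * c - - b * d = a * c + b * d by ring.
have -> : a * d + - b * c = a * d - b * c by ring.
have hre : `|t * (a * c + b * d)| <= (t ^+ 2 * (a ^+ 2 + b ^+ 2) + (c ^+ 2 + d ^+ 2)) / 2.
  have := sqr_ge0 (t * a - c); have := sqr_ge0 (t * b - d).
  have := sqr_ge0 (t * a + c); have := sqr_ge0 (t * b + d).
  by move=> *; rewrite ler_norml; apply/andP; split; nra.
have him : `|t * (a * d - b * c)| <= (t ^+ 2 * (a ^+ 2 + b ^+ 2) + (c ^+ 2 + d ^+ 2)) / 2.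
  have := sqr_ge0 (t * a - d); have := sqr_ge0 (t * b + c).
  have := sqr_ge0 (t * a + d); have := sqr_ge0 (t * b - c).
  by move=> *; rewrite ler_norml; apply/andP; split; nra.
rewrite !normrM (ger0_norm t0) in hre him; lra.
Qed.

Lemma abs1M_le x y : abs1 (x * y) <= abs2 x + abs2 y.
Proof.
case: x y => a b [c d]; rewrite /abs1 /abs2 /=.
have hre : `|a * c - b * d| <= (a ^+ 2 + b ^+ 2 + (c ^+ 2 + d ^+ 2)) / 2.
  have := sqr_ge0 (a - c); have := sqr_ge0 (b + d).
  have := sqr_ge0 (a + c); have := sqr_ge0 (b - d).
  by move=> *; rewrite ler_norml; apply/andP; split; nra.
have him : `|a * d + b * c| <= (a ^+ 2 + b ^+ 2 + (c ^+ 2 + d ^+ 2)) / 2.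
  have := sqr_ge0 (a - d); have := sqr_ge0 (b - c).
  have := sqr_ge0 (a + d); have := sqr_ge0 (b + c).
  by move=> *; rewrite ler_norml; apply/andP; split; nra.
lra.
Qed.

End ComplexScalars.

Lemma cvg_sum_nat (K : numFieldType) (V : normedModType K)
    (g : nat -> nat -> V) (h : nat -> V) N :
  (forall n, (fun k => g k n) @ \oo --> h n) ->
  (fun k => \sum_(0 <= n < N) g k n) @ \oo --> \sum_(0 <= n < N) h n.
Proof. by move=> H; apply: cvg_big => [|i _]; [exact: add_continuous | exact: H]. Qed.

Section ComplexLimits.
Variable R : realType.
Local Notation C := R[i].
Local Notation re := (@complex.Re R).
Local Notation im := (@complex.Im R).

Lemma normc_real (x : R) : `|x%:C| = `|x|%:C.
Proof. by rewrite normc_def /= expr0n /= addr0 sqrtr_sqr. Qed.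

Lemma cvg_real_complex (u : nat -> R) (l : R) :
  u @ \oo --> l -> (fun n => (u n)%:C : C) @ \oo --> l%:C.
Proof.
move=> /cvgrPdist_lt H; apply/cvgrPdist_lt => -[a b].
rewrite ltcE /= => /andP[/eqP b0 a0]; subst b.
near=> n; rewrite -rmorphB normc_real ltcR; near: n; exact: H.
Unshelve. all: by end_near. Qed.

Lemma cvg_ReIm (u : nat -> C) (l : C) : u @ \oo --> l <->
  (fun n => re (u n)) @ \oo --> re l /\ (fun n => im (u n)) @ \oo --> im l.
Proof.
split.
- move=> /cvgrPdist_lt H; split; apply/cvgrPdist_lt => e e0; near=> n.
  + rewrite -reB -ltcR; apply: le_lt_trans (norm_re_le (l - u n)) _.
    by near: n; apply: H; rewrite ltcR.
  + rewrite -imB -ltcR; apply: le_lt_trans (norm_im_le (l - u n)) _.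
    by near: n; apply: H; rewrite ltcR.
- move=> [Hre Him].
  have -> : u = (fun n => (re (u n))%:C + 'i * (im (u n))%:C).
    by apply: funext => n; rewrite -complexE.
  rewrite [l]complexE; apply: cvgD; first exact: cvg_real_complex.
  by apply: cvgM; [exact: cvg_cst | exact: cvg_real_complex].
Unshelve. all: by end_near. Qed.

Lemma limn_eq (u : nat -> C) (l : C) : u @ \oo --> l -> limn u = l.
Proof. by move=> H; exact: (cvg_lim (F := \oo) _ H). Qed.

(* [limn] of a divergent sequence is [0]. *)
Lemma limn_neq0_cvg (u : nat -> C) (l : C) :
  limn u = l -> l != 0 -> u @ \oo --> l.
Proof.
move=> ul l_neq0.
have cu : cvgn u.
  apply: contrapT => ncu; move: l_neq0; rewrite -ul /lim /lim_in getPN.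
    by move/negP; apply; apply/eqP.
  by move=> l' ul'; apply: ncu; apply/cvg_ex; exists l'.
by rewrite -ul; exact: cu.
Qed.

Lemma cvg_eventually_const (u : nat -> C) (c : C) M :
  (forall k, (M <= k)%N -> u k = c) -> u @ \oo --> c.
Proof.
move=> H; rewrite -(cvg_shiftn M).
rewrite (_ : (fun n => u (n + M)%N) = fun=> c); first exact: cvg_cst.
by apply: funext => n; apply: H; rewrite leq_addl.
Qed.

Lemma cvg_lincomb (u v : nat -> C) (a b z : C) : u @ \oo --> a -> v @ \oo --> b ->
  (fun n => u n + z * v n) @ \oo --> a + z * b.
Proof. by move=> Hu Hv; apply: cvgD; [exact: Hu | apply: cvgM; [exact: cvg_cst | exact: Hv]]. Qed.

Lemma cvg_conj (u : nat -> C) (l : C) : u @ \oo --> l -> (fun n => (u n)^*) @ \oo --> l^*.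
Proof.
move=> /cvg_ReIm [Hre Him]; apply/cvg_ReIm; split.
- rewrite (_ : (fun n => re (u n)^*) = fun n => re (u n)); last first.
    by apply: funext => n; case: (u n).
  by case: l Hre Him.
- rewrite (_ : (fun n => im (u n)^*) = fun n => - im (u n)); last first.
    by apply: funext => n; case: (u n).
  by case: l Hre Him => a b /= _; exact: cvgN.
Qed.

Lemma cvg_abs2 (u : nat -> C) (l : C) : u @ \oo --> l -> (fun k => abs2 (u k)) @ \oo --> abs2 l.
Proof.
move=> /cvg_ReIm [Hre Him]; rewrite /abs2.
under eq_cvg do rewrite !expr2.
by rewrite !expr2; apply: cvgD; apply: cvgM.
Qed.

Lemma cvg_abs1 (u : nat -> C) (l : C) : u @ \oo --> l -> (fun n => abs1 (u n)) @ \oo --> abs1 l.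
Proof. by move=> /cvg_ReIm [Hre Him]; apply: cvgD; apply: cvg_norm. Qed.

Lemma cvg0_abs1 (u : nat -> C) : (fun n => abs1 (u n)) @ \oo --> 0 -> u @ \oo --> 0.
Proof.
move=> /cvgrPdist_le H.
have small n e : `|0 - abs1 (u n)| <= e -> `|re (u n)| <= e /\ `|im (u n)| <= e.
  rewrite sub0r normrN ger0_norm ?abs1_ge0 // /abs1 => h.
  by split; apply: le_trans h; rewrite ?lerDl ?lerDr.
apply/cvg_ReIm; split => /=; apply/cvgrPdist_le => e e0;
  near=> n; rewrite sub0r normrN; have [] := small n e; by [near: n; exact: H|].
Unshelve. all: by end_near. Qed.

(* [|a_n| <= t b_n + c / t]: first take [t] large, then [n] large. *)
Lemma cvg0_scaled_bound (a : nat -> C) (b : nat -> R) (c : R) :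
  b @ \oo --> 0 -> 0 <= c ->
  (forall n t, 0 <= t -> t * abs1 (a n) <= t ^+ 2 * b n + c) -> a @ \oo --> 0.
Proof.
move=> /cvgrPdist_le Hb c0 H; apply: cvg0_abs1; apply/cvgrPdist_le => e e0.
set t := 2 * (c + 1) / e.
have t0 : 0 < t by rewrite /t divr_gt0 // mulr_gt0 // ltr_wpDl.
have te : t * e = 2 * (c + 1) by rewrite /t divfK // gt_eqF.
have tb : t ^+ 2 * (e / (2 * t)) = c + 1.
  by rewrite (_ : c + 1 = t * e / 2); [field; rewrite gt_eqF | rewrite te; field].
near=> n; rewrite sub0r normrN ger0_norm ?abs1_ge0 //.
have bn : b n <= e / (2 * t).
  apply: le_trans (ler_norm _) _; rewrite -normrN -sub0r.
  by near: n; apply: Hb; rewrite divr_gt0 // mulr_gt0.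
have tbn : t ^+ 2 * b n <= c + 1 by rewrite -tb ler_wpM2l ?sqr_ge0.
have h_t := H n t (ltW t0).
by rewrite -(ler_pM2l t0) te; lra.
Unshelve. all: by end_near. Qed.

Lemma seriesDZ (u v : nat -> C) (z : C) :
  series (fun n => u n + z * v n) = (fun N => series u N + z * series v N).
Proof. by apply: funext => N; rewrite /series /= big_split /= mulr_sumr. Qed.

Lemma cvg_series_ReIm (u : nat -> C) (l : C) : series u @ \oo --> l <->
  series (fun n => re (u n)) @ \oo --> re l /\ series (fun n => im (u n)) @ \oo --> im l.
Proof.
rewrite cvg_ReIm.
have -> : (fun n => re (series u n)) = series (fun n => re (u n)).
  by apply: funext => n; rewrite /series /= re_sum.
have -> : (fun n => im (series u n)) = series (fun n => im (u n)).
  by apply: funext => n; rewrite /series /= im_sum.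
done.
Qed.

Lemma cvg_series_real (u : nat -> R) (l : R) : series u @ \oo --> l ->
  series (fun n => (u n)%:C : C) @ \oo --> l%:C.
Proof.
move=> H; apply/cvg_series_ReIm; split => //=.
rewrite (_ : series _ = fun=> 0); first exact: cvg_cst.
by apply: funext => n; rewrite /series /= big1.
Qed.

Lemma cvg_series_re (u : nat -> R) (l : C) : series (fun n => (u n)%:C : C) @ \oo --> l ->
  series u @ \oo --> re l.
Proof. by move/cvg_series_ReIm => []. Qed.

Section NonnegativeSeries.
Variables (u : nat -> R).
Hypothesis u_ge0 : forall n, 0 <= u n.

Lemma nondecreasing_series_ge0 : nondecreasing_seq (series u).
Proof. by move=> m n mn; apply: (@nondecreasing_series _ u xpredT 0) => // k _ _. Qed.

Lemma is_cvg_series_ge0 M : (forall N, series u N <= M) -> cvgn (series u).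
Proof.
move=> uM; apply: nondecreasing_is_cvgn; first exact: nondecreasing_series_ge0.
by exists M => _ [n _ <-].
Qed.

Lemma series_le_lim_ge0 N : cvgn (series u) -> series u N <= limn (series u).
Proof. by move=> cu; apply: nondecreasing_cvgn_le => //; exact: nondecreasing_series_ge0. Qed.

Lemma lim_series_le_ge0 M : (forall N, series u N <= M) -> limn (series u) <= M.
Proof.
move=> uM; apply: limr_le; first exact: (is_cvg_series_ge0 uM).
by near=> n; exact: uM.
Unshelve. all: by end_near. Qed.

End NonnegativeSeries.

Lemma is_cvg_series_abs1 (u : nat -> C) M :
  (forall N, series (fun n => abs1 (u n)) N <= M) -> cvgn (series u).
Proof.
have absolutely (v : nat -> R) :
    (forall N, series (fun n => `|v n|) N <= M) -> cvgn (series v).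
  by move=> vM; apply: (@normed_cvg R R^o); exact: (is_cvg_series_ge0 (fun n => normr_ge0 _) vM).
move=> uM.
have cvg_re : cvgn (series (fun n => re (u n))).
  apply: absolutely => N; apply: le_trans (uM N).
  by apply: ler_sum => i _; rewrite /abs1 lerDl.
have cvg_im : cvgn (series (fun n => im (u n))).
  apply: absolutely => N; apply: le_trans (uM N).
  by apply: ler_sum => i _; rewrite /abs1 lerDr.
apply/cvg_ex; exists (limn (series (fun n => re (u n))) +i* limn (series (fun n => im (u n)))).
by apply/cvg_series_ReIm; split; [exact: cvg_re | exact: cvg_im].
Qed.

End ComplexLimits.

Section SequenceSpace.
Variable R : realType.
Local Notation C := R[i].
Local Notation vec := (vec R).

(* A junk value unless [l2 x]. *)
Definition sqnorm (x : vec) : R := limn (series (fun n => abs2 (x n))).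

Lemma l2P (x : vec) : l2 x <-> exists M, forall N, series (fun n => abs2 (x n)) N <= M.
Proof.
rewrite /l2 (_ : (fun n => `|x n| ^+ 2) = (fun n => (abs2 (x n))%:C)); last first.
  by apply: funext => n; rewrite sqr_norm_abs2.
split.
- move=> /cvg_ex [l /cvg_series_re H]; exists (complex.Re l) => N.
  rewrite -(cvg_lim _ H) //.
  by apply: (series_le_lim_ge0 (fun n => abs2_ge0 (x n))); exact: cvgP H.
- move=> [M HM]; apply/cvg_ex; eexists; apply: cvg_series_real.
  exact: (is_cvg_series_ge0 (fun n => abs2_ge0 (x n)) HM).
Qed.

Lemma cvg_series_sqnorm (x : vec) : l2 x -> series (fun n => abs2 (x n)) @ \oo --> sqnorm x.
Proof. by move=> /l2P [M HM]; exact: (is_cvg_series_ge0 (fun n => abs2_ge0 (x n)) HM). Qed.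

Lemma series_le_sqnorm (x : vec) N : l2 x -> series (fun n => abs2 (x n)) N <= sqnorm x.
Proof.
by move=> lx; apply: (series_le_lim_ge0 (fun n => abs2_ge0 (x n))); exact: cvg_series_sqnorm.
Qed.

Lemma sqnorm_ge0 (x : vec) : l2 x -> 0 <= sqnorm x.
Proof. by move=> lx; apply: le_trans (series_le_sqnorm 0 lx); rewrite /series /= big_geq. Qed.

Lemma l2_sqnorm_le (x : vec) M :
  (forall N, series (fun n => abs2 (x n)) N <= M) -> l2 x /\ sqnorm x <= M.
Proof.
move=> HM; split; first by apply/l2P; exists M.
exact: (lim_series_le_ge0 (fun n => abs2_ge0 (x n)) HM).
Qed.

Lemma l2_fatou (x : nat -> vec) (y : vec) M :
  (forall n, (fun k => x k n) @ \oo --> y n) ->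
  (forall k N, series (fun n => abs2 (x k n)) N <= M) ->
  l2 y /\ sqnorm y <= M.
Proof.
move=> xy xM; apply: l2_sqnorm_le => N.
apply: (@cvgr_to_le _ \oo _ _ (fun k => series (fun n => abs2 (x k n)) N)).
  by apply: cvg_sum_nat => n; apply: cvg_abs2; exact: xy.
by near=> k; exact: xM.
Unshelve. all: by end_near. Qed.

Lemma l2_0 : l2 (fun _ : nat => 0 : C).
Proof. by apply/l2P; exists 0 => N; rewrite /series /= big1 // => i _; exact: abs2_0. Qed.

Lemma l2DZ (x y : vec) (z : C) : l2 x -> l2 y -> l2 (fun n => x n + z * y n).
Proof.
move=> /l2P [Mx Hx] /l2P [My Hy]; apply/l2P; exists (2 * (Mx + abs2 z * My)) => N.
apply: le_trans (_ : 2 * (series (fun n => abs2 (x n)) N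
                          + abs2 z * series (fun n => abs2 (y n)) N) <= _).
  rewrite /series /= mulr_sumr -big_split /= mulr_sumr; apply: ler_sum => i _.
  by rewrite -abs2M; exact: abs2D_le.
by rewrite ler_pM2l // lerD // ler_wpM2l ?abs2_ge0.
Qed.

Lemma inner_cvg (x y : vec) : l2 x -> l2 y ->
  series (fun n => (x n)^* * y n) @ \oo --> inner x y.
Proof.
move=> /l2P [Mx Hx] /l2P [My Hy].
suff : cvgn (series (fun n => (x n)^* * y n)) by [].
apply: (@is_cvg_series_abs1 _ _ (Mx + My)) => N.
apply: le_trans (lerD (Hx N) (Hy N)); rewrite /series /= -big_split /=.
apply: ler_sum => i _; have := abs1_conjM_le (x i) (y i) ler01.
by rewrite mul1r expr1n mul1r.
Qed.

Lemma abs1_inner_le (x y : vec) t : l2 x -> l2 y -> 0 <= t ->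
  t * abs1 (inner x y) <= t ^+ 2 * sqnorm x + sqnorm y.
Proof.
move=> lx ly t0.
apply: (@cvgr_to_le _ \oo _ _ (fun N => t * abs1 (series (fun n => (x n)^* * y n) N))).
  by apply: cvgM; [exact: cvg_cst | apply: cvg_abs1; exact: inner_cvg].
near=> N.
apply: le_trans (lerD (ler_wpM2l (sqr_ge0 t) (series_le_sqnorm N lx)) (series_le_sqnorm N ly)).
apply: le_trans (ler_wpM2l t0 (abs1_sum_le _ _)) _.
rewrite /series /= mulr_sumr mulr_sumr -big_split /=.
by apply: ler_sum => i _; exact: abs1_conjM_le.
Unshelve. all: by end_near. Qed.

Lemma inner_self (x : vec) : l2 x -> inner x x = (sqnorm x)%:C.
Proof.
move=> lx; apply: limn_eq.
under eq_fun do rewrite conjM_abs2.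
by apply: cvg_series_real; exact: cvg_series_sqnorm.
Qed.

Lemma innerDZr (w x y : vec) (z : C) : l2 w -> l2 x -> l2 y ->
  inner w (fun n => x n + z * y n) = inner w x + z * inner w y.
Proof.
move=> lw lx ly; apply: limn_eq.
rewrite (_ : (fun n => (w n)^* * (x n + z * y n))
           = fun n => (w n)^* * x n + z * ((w n)^* * y n)); last first.
  by apply: funext => n; ring.
by rewrite seriesDZ; apply: cvg_lincomb; exact: inner_cvg.
Qed.

Lemma innerDZl (w x y : vec) (z : C) : l2 w -> l2 x -> l2 y ->
  inner (fun n => x n + z * y n) w = inner x w + z^* * inner y w.
Proof.
move=> lw lx ly; apply: limn_eq.
rewrite (_ : (fun n => (x n + z * y n)^* * w n)
           = fun n => (x n)^* * w n + z^* * ((y n)^* * w n)); last first.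
  by apply: funext => n; rewrite rmorphD rmorphM; ring.
by rewrite seriesDZ; apply: cvg_lincomb; exact: inner_cvg.
Qed.

Lemma inner_conj (x y : vec) : l2 x -> l2 y -> inner y x = (inner x y)^*.
Proof.
move=> lx ly; apply: limn_eq.
rewrite (_ : series _ = fun N => (series (fun n => (x n)^* * y n) N)^*).
  by apply: cvg_conj; exact: inner_cvg.
apply: funext => N; rewrite /series /= rmorph_sum; apply: eq_bigr => i _.
by case: (x i) (y i) => a b [c d]; rewrite /=; congr (_ +i* _); ring.
Qed.

Lemma cvg_inner0 (x : vec) (y : nat -> vec) (b : nat -> R) :
  l2 x -> (forall N, l2 (y N)) -> (forall N, sqnorm (y N) <= b N) -> b @ \oo --> 0 ->
  (fun N => inner x (y N)) @ \oo --> 0.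
Proof.
move=> lx ly yb b0; apply: (@cvg0_scaled_bound _ _ b (sqnorm x) b0 (sqnorm_ge0 lx)).
move=> N t t0; rewrite (inner_conj (ly N) lx) abs1_conj.
apply: le_trans (abs1_inner_le (ly N) lx t0) _.
by rewrite lerD2r ler_wpM2l ?sqr_ge0.
Qed.

Lemma inner0r (w : vec) : inner w (fun _ => 0) = 0.
Proof.
apply: limn_eq; rewrite (_ : series _ = fun _ => 0); first exact: cvg_cst.
by apply: funext => N; rewrite /series /= big1 // => i _; rewrite mulr0.
Qed.

Lemma inner0l (w : vec) : inner (fun _ => 0) w = 0.
Proof.
apply: limn_eq; rewrite (_ : series _ = fun _ => 0); first exact: cvg_cst.
by apply: funext => N; rewrite /series /= big1 // => i _; rewrite rmorph0 mul0r.
Qed.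

Lemma sum_nat_delta (F : nat -> C) m M :
  \sum_(0 <= k < M) F k * (m == k)%:R = if (m < M)%N then F m else 0.
Proof.
elim: M => [|M IH]; first by rewrite big_geq.
rewrite big_nat_recr //= IH; have [->|ne] := eqVneq m M.
  by rewrite ltnn leqnn mulr1 add0r.
have -> : (m < M.+1)%N = (m < M)%N by rewrite ltnS leq_eqVlt (negPf ne).
by rewrite mulr0 addr0.
Qed.

Definition delta (p : nat) : vec := fun n => (n == p)%:R.

Lemma l2_delta p : l2 (delta p) /\ sqnorm (delta p) <= 1.
Proof.
apply: l2_sqnorm_le => N; rewrite /series /=.
under eq_bigr do rewrite /delta abs2_bool.
elim: N => [|N IH]; first by rewrite big_geq.
rewrite big_nat_recr //=; have [->|ne] := eqVneq N p; last by rewrite addr0.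
suff -> : \sum_(0 <= n < p) ((n == p)%:R : R) = 0 by rewrite add0r.
by apply: big1_seq => n /andP[_]; rewrite mem_index_iota => /andP[_ h]; rewrite (ltn_eqF h).
Qed.

Lemma inner_delta (w : vec) p : inner w (delta p) = (w p)^*.
Proof.
apply: limn_eq; apply: (@cvg_eventually_const _ _ _ p.+1) => k hk.
rewrite /series /= /delta.
under eq_bigr do rewrite eq_sym.
by rewrite sum_nat_delta hk.
Qed.

Definition trunc (M : nat) (y : vec) : vec := fun n => if (n < M)%N then y n else 0.
Definition cotrunc (M : nat) (y : vec) : vec := fun n => if (M <= n)%N then y n else 0.
Definition tail (y : vec) (M : nat) : R := sqnorm y - series (fun n => abs2 (y n)) M.

Lemma trunc_cotrunc M (y : vec) : y = fun n => trunc M y n + 1 * cotrunc M y n.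
Proof.
apply: funext => n; rewrite /trunc /cotrunc mul1r.
by case: ltnP => _; rewrite ?addr0 ?add0r.
Qed.

Lemma cvg_tail (y : vec) : l2 y -> tail y @ \oo --> 0.
Proof.
by move=> ly; rewrite -(subrr (sqnorm y)); apply: cvgB; [exact: cvg_cst | exact: cvg_series_sqnorm].
Qed.

Lemma l2_trunc M (y : vec) : l2 y -> l2 (trunc M y).
Proof.
move=> ly; apply/l2P; exists (sqnorm y) => k; apply: le_trans (series_le_sqnorm k ly).
by apply: ler_sum => n _; rewrite /trunc; case: ifP; rewrite ?abs2_0 ?abs2_ge0.
Qed.

Lemma l2_cotrunc M (y : vec) : l2 y -> l2 (cotrunc M y) /\ sqnorm (cotrunc M y) <= tail y M.
Proof.
move=> ly; apply: l2_sqnorm_le => k; rewrite /series /=.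
apply: le_trans (_ : \sum_(0 <= n < k + M) abs2 (cotrunc M y n) <= _).
  rewrite (big_cat_nat (leq0n k) (leq_addr M k)) /= lerDl.
  by apply: sumr_ge0 => i _; exact: abs2_ge0.
rewrite (big_cat_nat (leq0n M) (leq_addl k M)) /= big1_seq ?add0r; last first.
  by move=> n /andP[_]; rewrite mem_index_iota /cotrunc => /andP[_ h]; rewrite leqNgt h abs2_0.
rewrite /tail lerBrDr; apply: le_trans (series_le_sqnorm (k + M) ly).
rewrite /series /= (big_cat_nat (leq0n M) (leq_addl k M)) /= addrC lerD2r.
by apply: ler_sum_nat => n /andP[h _]; rewrite /cotrunc h.
Qed.

Lemma inner_trunc (x y : vec) M : inner x (trunc M y) = \sum_(0 <= n < M) (x n)^* * y n.
Proof.
apply: limn_eq; apply: (@cvg_eventually_const _ _ _ M) => k hk.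
rewrite /series /= /trunc (big_cat_nat (leq0n M) hk) /= [X in _ + X]big1_seq ?addr0; last first.
  by move=> i /andP[_]; rewrite mem_index_iota => /andP[h _]; rewrite ltnNge h mulr0.
by apply: eq_big_nat => i /andP[_ h]; rewrite h.
Qed.

End SequenceSpace.

Arguments delta {R} p _.

Section OrthonormalSystem.
Variable R : realType.
Local Notation C := R[i].
Local Notation vec := (vec R).
Variable u : nat -> vec.
Hypothesis u_l2 : forall n, l2 (u n).
Hypothesis u_orth : forall m n, inner (u m) (u n) = (m == n)%:R.

Definition comb (c : vec) (M : nat) : vec := fun p => \sum_(0 <= m < M) c m * u m p.

Lemma comb0 c : comb c 0 = fun _ => 0.
Proof. by apply: funext => p; rewrite /comb big_geq. Qed.

Lemma combS c M : comb c M.+1 = fun p => comb c M p + c M * u M p.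
Proof. by apply: funext => p; rewrite /comb big_nat_recr. Qed.

Lemma l2_comb c M : l2 (comb c M).
Proof.
elim: M => [|M IH]; first by rewrite comb0; exact: l2_0.
by rewrite combS; apply: l2DZ; [exact: IH | exact: u_l2].
Qed.

Lemma inner_comb_r (w : vec) c M : l2 w ->
  inner w (comb c M) = \sum_(0 <= m < M) c m * inner w (u m).
Proof.
move=> lw; elim: M => [|M IH]; first by rewrite comb0 inner0r big_geq.
by rewrite combS (innerDZr _ lw (@l2_comb c M) (@u_l2 M)) IH big_nat_recr.
Qed.

Lemma inner_comb_l (w : vec) c M : l2 w ->
  inner (comb c M) w = \sum_(0 <= m < M) (c m)^* * inner (u m) w.
Proof.
move=> lw; elim: M => [|M IH]; first by rewrite comb0 inner0l big_geq.
by rewrite combS (innerDZl _ lw (@l2_comb c M) (@u_l2 M)) IH big_nat_recr.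
Qed.

Lemma inner_basis_comb m c M : inner (u m) (comb c M) = if (m < M)%N then c m else 0.
Proof. by rewrite inner_comb_r // -sum_nat_delta; apply: eq_bigr => k _; rewrite u_orth. Qed.

Lemma inner_comb c d M : inner (comb c M) (comb d M) = \sum_(0 <= m < M) (c m)^* * d m.
Proof.
rewrite inner_comb_l; last exact: l2_comb.
by apply: eq_big_nat => m /andP[_ hm]; rewrite inner_basis_comb hm.
Qed.

Lemma sqnorm_comb c M : sqnorm (comb c M) = \sum_(0 <= m < M) abs2 (c m).
Proof.
apply: complexI; rewrite -(inner_self (@l2_comb c M)) inner_comb.
by rewrite rmorph_sum; apply: eq_bigr => m _; rewrite conjM_abs2.
Qed.

Lemma series_abs2_comb_le c M N :
  series (fun n => abs2 (comb c M n)) N <= \sum_(0 <= m < M) abs2 (c m).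
Proof. by rewrite -sqnorm_comb; apply: series_le_sqnorm; exact: l2_comb. Qed.

Definition coef (x : vec) : vec := fun n => inner (u n) x.

Lemma bessel (x : vec) N : l2 x -> \sum_(0 <= n < N) abs2 (coef x n) <= sqnorm x.
Proof.
move=> lx; set P := comb (coef x) N.
have lP : l2 P by exact: l2_comb.
set y := fun p => x p + (-1) * P p.
have ly : l2 y by exact: l2DZ.
have xy : inner x y = (sqnorm x)%:C - \sum_(0 <= m < N) (abs2 (coef x m))%:C.
  rewrite /y (innerDZr _ lx lx lP) (inner_self lx) (inner_comb_r _ _ lx) mulN1r.
  congr (_ - _).
  by apply: eq_bigr => m _; rewrite (inner_conj (@u_l2 m) lx) -conjM_abs2 mulrC.
have Py : inner P y = 0.
  by rewrite /y (innerDZr _ lP lx lP) inner_comb (inner_comb_l _ _ lx) mulN1r /coef subrr.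
have : (sqnorm y)%:C = (sqnorm x)%:C - \sum_(0 <= m < N) (abs2 (coef x m))%:C.
  by rewrite -(inner_self ly) {1}/y (innerDZl _ ly lx lP) xy Py mulr0 addr0.
rewrite -rmorph_sum -rmorphB => /complexI sqnorm_y.
by rewrite -subr_ge0 -sqnorm_y; exact: sqnorm_ge0.
Qed.

Lemma l2_coef (x : vec) : l2 x -> l2 (coef x) /\ sqnorm (coef x) <= sqnorm x.
Proof. by move=> lx; apply: l2_sqnorm_le => N; exact: bessel. Qed.

Lemma coefDZ (x y : vec) (z : C) : l2 x -> l2 y ->
  coef (fun n => x n + z * y n) = fun n => coef x n + z * coef y n.
Proof. by move=> lx ly; apply: funext => n; rewrite /coef (innerDZr _ (@u_l2 n) lx ly). Qed.

Lemma coef_basis m : coef (u m) = delta m.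
Proof. by apply: funext => n; rewrite /coef u_orth. Qed.

(* Bessel's inequality for the unit vector [delta p]. *)
Lemma series_abs2_column_le p N : series (fun m => abs2 (u m p)) N <= 1.
Proof.
have [ld nd] := @l2_delta R p.
apply: le_trans nd; apply: le_trans (bessel N ld); rewrite /series /=.
by apply: ler_sum => m _; rewrite /coef inner_delta abs2_conj.
Qed.

Definition syn (y : vec) : vec := fun p => limn (series (fun m => y m * u m p)).

Lemma cvg_syn (y : vec) p : l2 y -> series (fun m => y m * u m p) @ \oo --> syn y p.
Proof.
move=> /l2P [My Hy].
suff : cvgn (series (fun m => y m * u m p)) by [].
apply: (@is_cvg_series_abs1 _ _ (My + 1)) => N.
apply: le_trans (lerD (Hy N) (series_abs2_column_le p N)).
by rewrite /series /= -big_split /=; apply: ler_sum => i _; exact: abs1M_le.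
Qed.

Lemma l2_syn (y : vec) : l2 y -> l2 (syn y) /\ sqnorm (syn y) <= sqnorm y.
Proof.
move=> ly; apply: (@l2_fatou _ (comb y)) => [p|k N]; first exact: cvg_syn.
by apply: le_trans (series_abs2_comb_le _ _ _) (series_le_sqnorm k ly).
Qed.

Lemma synDZ (y y' : vec) (z : C) : l2 y -> l2 y' ->
  syn (fun n => y n + z * y' n) = fun p => syn y p + z * syn y' p.
Proof.
move=> ly ly'; apply: funext => p; apply: limn_eq.
rewrite (_ : (fun m => (y m + z * y' m) * u m p)
           = fun m => y m * u m p + z * (y' m * u m p)); last first.
  by apply: funext => m; ring.
by rewrite seriesDZ; apply: cvg_lincomb; exact: cvg_syn.
Qed.

Lemma syn_trunc M (y : vec) : syn (trunc M y) = comb y M.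
Proof.
apply: funext => p; apply: limn_eq; apply: (@cvg_eventually_const _ _ _ M) => k hk.
rewrite /series /= /trunc (big_cat_nat (leq0n M) hk) /= [X in _ + X]big1_seq ?addr0; last first.
  by move=> i /andP[_]; rewrite mem_index_iota => /andP[h _]; rewrite ltnNge h mul0r.
by apply: eq_big_nat => i /andP[_ h]; rewrite h.
Qed.

Lemma inner_syn (y x : vec) : l2 y -> l2 x -> inner (syn y) x = inner y (coef x).
Proof.
move=> ly lx; apply/esym/limn_eq.
have partial M : series (fun n => (y n)^* * coef x n) M
                 = inner (syn y) x - inner (syn (cotrunc M y)) x.
  have lt := l2_trunc (M:=M) ly; have [lct _] := l2_cotrunc M ly.
  have [lst _] := l2_syn lt; have [lsct _] := l2_syn lct.
  rewrite {2}(trunc_cotrunc M y) (synDZ _ lt lct) (innerDZl _ lx lst lsct).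
  by rewrite syn_trunc (inner_comb_l _ _ lx) rmorph1 mul1r addrK.
rewrite (_ : series _ = fun M => inner (syn y) x - inner (syn (cotrunc M y)) x); last first.
  exact: funext.
rewrite -[X in _ --> X]subr0; apply: cvgB; first exact: cvg_cst.
apply: (@cvg0_scaled_bound _ _ (tail y) (sqnorm x)); [exact: cvg_tail | exact: sqnorm_ge0 |].
move=> M t t0; have [lct nct] := l2_cotrunc M ly; have [ls ns] := l2_syn lct.
apply: le_trans (abs1_inner_le ls lx t0) _.
by rewrite lerD2r ler_wpM2l ?sqr_ge0 // (le_trans ns nct).
Qed.

Lemma coef_syn (y : vec) : l2 y -> coef (syn y) = y.
Proof.
move=> ly; have [ls _] := l2_syn ly.
apply: funext => m; rewrite /coef (inner_conj ls (@u_l2 m)) (inner_syn ly (@u_l2 m)).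
by rewrite coef_basis inner_delta conjcK.
Qed.

Lemma sqnorm_syn (y : vec) : l2 y -> sqnorm (syn y) = sqnorm y.
Proof.
move=> ly; have [ls _] := l2_syn ly; apply: complexI.
by rewrite -(inner_self ls) -(inner_self ly) (inner_syn ly ls) coef_syn.
Qed.

End OrthonormalSystem.

Section MatrixOperator.
Variable R : realType.
Local Notation C := R[i].
Local Notation vec := (vec R).

Definition mx_bounded (K : mat R) (L : R) : Prop :=
  forall (c : vec) N M,
  \sum_(0 <= m < M) abs2 (\sum_(0 <= n < N) K m n * c n) <= L * \sum_(0 <= n < N) abs2 (c n).

Definition adjmx (K : mat R) : mat R := fun n m => (K m n)^*.

Definition mxop (K : mat R) (c : vec) : vec := fun m => limn (series (fun n => K m n * c n)).

Variables (K : mat R) (L : R).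
Hypothesis L_ge0 : 0 <= L.
Hypothesis K_bounded : mx_bounded K L.

(* Test [K_bounded] on the vector [conj (K m _)] and keep only row [m]. *)
Lemma mx_bounded_row m N : \sum_(0 <= n < N) abs2 (K m n) <= L.
Proof.
set s := \sum_(0 <= n < N) abs2 (K m n).
have s_ge0 : 0 <= s by apply: sumr_ge0 => i _; exact: abs2_ge0.
have := K_bounded (fun n => (K m n)^*) N m.+1.
rewrite big_nat_recr //=.
have -> : \sum_(0 <= n < N) K m n * (K m n)^* = s%:C.
  by rewrite /s rmorph_sum; apply: eq_bigr => n _; rewrite mulrC conjM_abs2.
have -> : \sum_(0 <= n < N) abs2 (K m n)^* = s by apply: eq_bigr => n _; rewrite abs2_conj.
have : 0 <= \sum_(0 <= i < m) abs2 (\sum_(0 <= n < N) K i n * (K m n)^*).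
  by apply: sumr_ge0 => i _; exact: abs2_ge0.
rewrite abs2_real => others sL; have s2 : s ^+ 2 <= L * s by lra.
have [->|s_neq0] := eqVneq s 0; first by [].
have s_gt0 : 0 < s by rewrite lt_def s_neq0 s_ge0.
by rewrite -(ler_pM2r s_gt0) -expr2.
Qed.

Lemma cvg_mxop (c : vec) m : l2 c -> series (fun n => K m n * c n) @ \oo --> mxop K c m.
Proof.
move=> /l2P [Mc Hc].
suff : cvgn (series (fun n => K m n * c n)) by [].
apply: (@is_cvg_series_abs1 _ _ (L + Mc)) => N.
apply: le_trans (lerD (mx_bounded_row m N) (Hc N)); rewrite /series /= -big_split /=.
by apply: ler_sum => i _; exact: abs1M_le.
Qed.

Lemma l2_mxop (c : vec) : l2 c -> l2 (mxop K c) /\ sqnorm (mxop K c) <= L * sqnorm c.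
Proof.
move=> lc; apply: (@l2_fatou _ (fun k m => series (fun n => K m n * c n) k)) => [p|k N].
  exact: cvg_mxop.
by apply: le_trans (K_bounded c k N) _; rewrite ler_wpM2l // series_le_sqnorm.
Qed.

Lemma mxopDZ (c c' : vec) (z : C) : l2 c -> l2 c' ->
  mxop K (fun n => c n + z * c' n) = fun m => mxop K c m + z * mxop K c' m.
Proof.
move=> lc lc'; apply: funext => m; apply: limn_eq.
rewrite (_ : (fun n => K m n * (c n + z * c' n))
           = fun n => K m n * c n + z * (K m n * c' n)); last first.
  by apply: funext => n; ring.
by rewrite seriesDZ; apply: cvg_lincomb; exact: cvg_mxop.
Qed.

Lemma mxop_delta n : mxop K (delta n) = fun m => K m n.
Proof.
apply: funext => m; apply: limn_eq; apply: (@cvg_eventually_const _ _ _ n.+1) => k hk.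
rewrite /series /= /delta.
under eq_bigr do rewrite eq_sym.
by rewrite sum_nat_delta hk.
Qed.

Lemma mxop_trunc (c : vec) N m : mxop K (trunc N c) m = \sum_(0 <= n < N) K m n * c n.
Proof.
apply: limn_eq; apply: (@cvg_eventually_const _ _ _ N) => k hk.
rewrite /series /= /trunc (big_cat_nat (leq0n N) hk) /= [X in _ + X]big1_seq ?addr0; last first.
  by move=> i /andP[_]; rewrite mem_index_iota => /andP[h _]; rewrite ltnNge h mulr0.
by apply: eq_big_nat => i /andP[_ h]; rewrite h.
Qed.

Lemma cvg_inner_mxop_trunc (d c : vec) : l2 d -> l2 c ->
  (fun N => inner d (mxop K (trunc N c))) @ \oo --> inner d (mxop K c).
Proof.
move=> ld lc; have [lKc _] := l2_mxop lc.
have split_c N : inner d (mxop K (trunc N c))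
                 = inner d (mxop K c) + (-1) * inner d (mxop K (cotrunc N c)).
  have lt := l2_trunc (M:=N) lc; have [lct _] := l2_cotrunc N lc.
  have [lKt _] := l2_mxop lt; have [lKct _] := l2_mxop lct.
  rewrite {2}(trunc_cotrunc N c) (mxopDZ _ lt lct) (innerDZr _ ld lKt lKct).
  by rewrite mul1r mulN1r addrK.
rewrite (_ : (fun N => _) = fun N => inner d (mxop K c) + (-1) * inner d (mxop K (cotrunc N c))).
  rewrite -[X in _ --> X]addr0 -[X in _ + X](mulr0 (-1)).
  apply: cvg_lincomb; first exact: cvg_cst.
  apply: (@cvg_inner0 _ _ _ (fun N => L * tail c N) ld).
  - by move=> N; have [lct _] := l2_cotrunc N lc; have [] := l2_mxop lct.
  - move=> N; have [lct nct] := l2_cotrunc N lc; have [_ nKct] := l2_mxop lct.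
    by apply: le_trans nKct _; rewrite ler_wpM2l.
  - by rewrite -(mulr0 L); apply: cvgM; [exact: cvg_cst | exact: cvg_tail].
exact: funext.
Qed.

End MatrixOperator.

Section AdjointMatrix.
Variable R : realType.
Local Notation C := R[i].
Local Notation vec := (vec R).
Variables (K : mat R) (L : R).
Hypothesis L_ge0 : 0 <= L.
Hypothesis K_bounded : mx_bounded K L.

(* With [w = K^* d] and [v = K w] one has [|w|^2 = <d, v>]; weighted AM-GM
   with weight [L + 1] then bounds [|w|^2] by [(L + 1)^2 |d|^2]. *)
Lemma mx_bounded_adjmx : mx_bounded (adjmx K) ((L + 1) ^+ 2).
Proof.
move=> d N M.
set w := fun n => \sum_(0 <= m < N) adjmx K n m * d m.
set s := \sum_(0 <= n < M) abs2 (w n).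
set v := fun m => \sum_(0 <= n < M) K m n * w n.
have Kw : \sum_(0 <= m < N) abs2 (v m) <= L * s := K_bounded w M N.
have s_dual : s%:C = \sum_(0 <= m < N) (d m)^* * v m.
  rewrite /s rmorph_sum (eq_bigr (fun n => (w n)^* * w n)); last first.
    by move=> n _; rewrite conjM_abs2.
  have conj_w n : (w n)^* = \sum_(0 <= m < N) K m n * (d m)^*.
    rewrite /w rmorph_sum; apply: eq_bigr => m _.
    by rewrite /adjmx; case: (K m n) (d m) => a b [c e] /=; congr (_ +i* _); ring.
  transitivity (\sum_(0 <= n < M) \sum_(0 <= m < N) K m n * (d m)^* * w n).
    by apply: eq_bigr => n _; rewrite -mulr_suml; congr (_ * _); exact: conj_w.
  rewrite exchange_big_nat /=; apply: eq_bigr => m _.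
  by rewrite /v mulr_sumr; apply: eq_bigr => n _; ring.
have t_ge0 : 0 <= L + 1 by rewrite addr_ge0.
have : (L + 1) * s <= (L + 1) ^+ 2 * \sum_(0 <= m < N) abs2 (d m) + L * s.
  apply: le_trans (_ : \sum_(0 <= m < N) (L + 1) * abs1 ((d m)^* * v m) <= _).
    have -> : s = complex.Re s%:C by [].
    rewrite s_dual re_sum mulr_sumr; apply: ler_sum => m _.
    by rewrite ler_wpM2l // re_le_abs1.
  apply: le_trans (_ : \sum_(0 <= m < N) ((L + 1) ^+ 2 * abs2 (d m) + abs2 (v m)) <= _).
    by apply: ler_sum => m _; exact: abs1_conjM_le.
  by rewrite big_split /= -mulr_sumr lerD2l.
lra.
Qed.

Lemma inner_mxop_adjmx (c d : vec) : l2 c -> l2 d ->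
  inner (mxop (adjmx K) d) c = inner d (mxop K c).
Proof.
move=> lc ld.
have Kd_bounded := mx_bounded_adjmx.
have [lKd _] := l2_mxop (sqr_ge0 (L + 1)) Kd_bounded ld.
have finite N : inner (mxop (adjmx K) d) (trunc N c) = inner d (mxop K (trunc N c)).
  rewrite inner_trunc; apply/esym/limn_eq.
  rewrite (_ : series _ = fun k => \sum_(0 <= n < N)
             (series (fun m => adjmx K n m * d m) k)^* * c n).
    apply: cvg_sum_nat => n; apply: cvgM; last exact: cvg_cst.
    by apply: cvg_conj; exact: (cvg_mxop (sqr_ge0 (L + 1)) Kd_bounded).
  apply: funext => k; rewrite /series /=.
  under eq_bigr do rewrite mxop_trunc.
  transitivity (\sum_(0 <= n < N) \sum_(0 <= m < k) K m n * (d m)^* * c n); last first.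
    apply: eq_bigr => n _; rewrite rmorph_sum mulr_suml; apply: eq_bigr => m _.
    by rewrite /adjmx; case: (K m n) (d m) (c n) => a b [e f] [g h] /=; congr (_ +i* _); ring.
  rewrite exchange_big_nat /=; apply: eq_bigr => m _.
  by rewrite mulr_sumr; apply: eq_bigr => n _; ring.
have lhs : (fun N => inner (mxop (adjmx K) d) (trunc N c)) @ \oo --> inner (mxop (adjmx K) d) c.
  by under eq_fun do rewrite inner_trunc; exact: inner_cvg.
have rhs := cvg_inner_mxop_trunc L_ge0 K_bounded ld lc.
by rewrite -(limn_eq lhs) -(limn_eq rhs); congr (limn _); apply: funext => N; exact: finite.
Qed.

End AdjointMatrix.

Section MatrixInBases.
Variable R : realType.
Local Notation vec := (vec R).
Variables u v : nat -> vec.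
Hypothesis u_l2 : forall n, l2 (u n).
Hypothesis u_orth : forall m n, inner (u m) (u n) = (m == n)%:R.
Hypothesis v_l2 : forall n, l2 (v n).
Hypothesis v_orth : forall m n, inner (v m) (v n) = (m == n)%:R.
Variables (K : mat R) (L : R).
Hypothesis L_ge0 : 0 <= L.
Hypothesis K_bounded : mx_bounded K L.

Definition opmx (x : vec) : vec := syn v (mxop K (coef u x)).

Lemma l2_opmx (x : vec) : l2 x -> l2 (opmx x) /\ sqnorm (opmx x) <= L * sqnorm x.
Proof.
move=> lx; have [lc nc] := l2_coef u_l2 u_orth lx.
have [lk nk] := l2_mxop L_ge0 K_bounded lc.
have [ls _] := l2_syn v_l2 v_orth lk.
split => //; rewrite /opmx (sqnorm_syn v_l2 v_orth lk).
by apply: le_trans nk _; rewrite ler_wpM2l.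
Qed.

Lemma is_bounded_opmx : is_bounded opmx.
Proof.
split; first by move=> x lx; have [] := l2_opmx lx.
split.
  move=> x y z lx ly; rewrite /opmx.
  have [lcx _] := l2_coef u_l2 u_orth lx; have [lcy _] := l2_coef u_l2 u_orth ly.
  have [lkx _] := l2_mxop L_ge0 K_bounded lcx; have [lky _] := l2_mxop L_ge0 K_bounded lcy.
  rewrite (coefDZ u_l2 _ lx ly) (mxopDZ L_ge0 K_bounded _ lcx lcy).
  by rewrite (synDZ v_l2 v_orth _ lkx lky).
exists L => x lx; have [lo no] := l2_opmx lx.
by rewrite (inner_self lo) (inner_self lx) -rmorphM lecR.
Qed.

Lemma inner_opmx_basis m n : inner (v m) (opmx (u n)) = K m n.
Proof.
rewrite /opmx (coef_basis u_orth) mxop_delta.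
have [lk _] := l2_mxop L_ge0 K_bounded (proj1 (@l2_delta R n)).
rewrite mxop_delta in lk.
by have := coef_syn v_l2 v_orth lk => /(congr1 (fun g => g m)).
Qed.

End MatrixInBases.

Lemma is_adjoint_opmx (R : realType) (u v : nat -> vec R) (K : mat R) (L : R) :
  (forall n, l2 (u n)) -> (forall m n, inner (u m) (u n) = (m == n)%:R) ->
  (forall n, l2 (v n)) -> (forall m n, inner (v m) (v n) = (m == n)%:R) ->
  0 <= L -> mx_bounded K L ->
  is_adjoint (opmx u v K) (opmx v u (adjmx K)).
Proof.
move=> u_l2 u_orth v_l2 v_orth L_ge0 K_bounded.
have Kd_bounded := mx_bounded_adjmx L_ge0 K_bounded.
split; first exact: (is_bounded_opmx v_l2 v_orth u_l2 u_orth (sqr_ge0 (L + 1)) Kd_bounded).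
move=> x y lx ly.
have [lcx _] := l2_coef u_l2 u_orth lx; have [lcy _] := l2_coef v_l2 v_orth ly.
have [lKx _] := l2_mxop L_ge0 K_bounded lcx.
have [lKdy _] := l2_mxop (sqr_ge0 (L + 1)) Kd_bounded lcy.
have [lsKx _] := l2_syn v_l2 v_orth lKx.
rewrite /opmx (inner_syn u_l2 u_orth lKdy lx) (inner_mxop_adjmx L_ge0 K_bounded lcx lcy).
by rewrite (inner_conj lsKx ly) (inner_syn v_l2 v_orth lKx ly) -(inner_conj lKx lcy).
Qed.

Section KrausTracePreserving.
Variable R : realType.
Local Notation C := R[i].
Variables (f : nat -> vec R) (Q : mat R -> mat R) (K : nat -> mat R).
Hypothesis kraus : forall a a' g h : seq C,
  series (fun alpha => sandw (K alpha) g a * (sandw (K alpha) h a')^*) @ \oo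
    --> sandw (Q (rank1 a a')) g h.
Hypothesis trace_preserving : forall (N : nat) (c : mat R), supported N c ->
  exists T : op R, trace_class f T /\
    (forall m n, inner (f m) (T (f n)) = Q c m n) /\ trace f T = \sum_(k < N) c k k.

(* Encodes [f_m] as an element of [D_f]. *)
Definition unit_seq (m : nat) : seq C := mkseq (fun i => (i == m)%:R) m.+1.

Lemma sandw_unit_seq_l (F : mat R) m (a : seq C) :
  sandw F (unit_seq m) a = \sum_(n < size a) F m n * a`_n.
Proof.
rewrite /sandw /unit_seq size_mkseq big_ord_recr /= big1 ?add0r.
  by apply: eq_bigr => n _; rewrite nth_mkseq // eqxx conjC1 mul1r.
move=> i _; apply: big1 => n _; rewrite nth_mkseq; last by rewrite ltnS ltnW.
by rewrite (ltn_eqF (ltn_ord i)) conjC0 !mul0r.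
Qed.

Lemma sandw_unit_seq (F : mat R) m : sandw F (unit_seq m) (unit_seq m) = F m m.
Proof.
rewrite sandw_unit_seq_l /unit_seq size_mkseq big_ord_recr /= big1 ?add0r.
  by rewrite nth_mkseq // eqxx mulr1.
move=> i _; rewrite nth_mkseq; last by rewrite ltnS ltnW.
by rewrite (ltn_eqF (ltn_ord i)) mulr0.
Qed.

Lemma supported_rank1 (a : seq C) : supported (size a) (rank1 a a).
Proof. by move=> k l [] h; rewrite /rank1 (nth_default 0 h) ?conjC0 ?mul0r ?mulr0. Qed.

Lemma cvg_kraus_diag (a : seq C) m :
  series (fun alpha => abs2 (\sum_(n < size a) K alpha m n * a`_n)) @ \oo
    --> complex.Re (Q (rank1 a a) m m).
Proof.
apply: cvg_series_re; have := @kraus a a (unit_seq m) (unit_seq m).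
rewrite sandw_unit_seq; under eq_fun do rewrite sandw_unit_seq_l mulrC conjM_abs2.
done.
Qed.

Lemma kraus_diag_le (a : seq C) alpha m :
  abs2 (\sum_(n < size a) K alpha m n * a`_n) <= complex.Re (Q (rank1 a a) m m).
Proof.
have abs2_ge0' alpha' := abs2_ge0 (\sum_(n < size a) K alpha' m n * a`_n).
have diag := @cvg_kraus_diag a m.
rewrite -(cvg_lim _ diag) //.
apply: le_trans (series_le_lim_ge0 abs2_ge0' alpha.+1 (cvgP _ diag)).
by rewrite /series /= big_nat_recr //= lerDr; apply: sumr_ge0.
Qed.

Lemma cvg_trace_rank1 (a : seq C) : \sum_(n < size a) abs2 a`_n != 0 ->
  series (fun m => complex.Re (Q (rank1 a a) m m)) @ \oo --> \sum_(n < size a) abs2 a`_n.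
Proof.
move=> a_neq0.
have [T [_ [T_Q trT]]] := trace_preserving (@supported_rank1 a).
have tr_rho : \sum_(k < size a) rank1 a a k k = (\sum_(n < size a) abs2 a`_n)%:C.
  by rewrite rmorph_sum; apply: eq_bigr => k _; rewrite /rank1 mulrC conjM_abs2.
suff : series (fun m => Q (rank1 a a) m m) @ \oo --> (\sum_(n < size a) abs2 a`_n)%:C.
  by move/cvg_series_ReIm => [].
have -> : series (fun m => Q (rank1 a a) m m) = series (fun m => inner (f m) (T (f m))).
  by apply: funext => k; apply: eq_bigr => n _; rewrite T_Q.
(* [trace_class] only asserts convergence of the trace of [|T|]. *)
apply: limn_neq0_cvg; first by rewrite -tr_rho.
apply/negP => /eqP /(congr1 (@complex.Re R)) /= s0.
by move: a_neq0; rewrite s0 eqxx.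
Qed.

Lemma kraus_mx_bounded alpha : mx_bounded (K alpha) 1.
Proof.
move=> c N M; rewrite mul1r.
set a := mkseq c N.
have Kc_a m : \sum_(0 <= n < N) K alpha m n * c n = \sum_(n < size a) K alpha m n * a`_n.
  by rewrite size_mkseq big_mkord; apply: eq_bigr => n _; rewrite nth_mkseq.
have c_a : \sum_(0 <= n < N) abs2 (c n) = \sum_(n < size a) abs2 a`_n.
  by rewrite size_mkseq big_mkord; apply: eq_bigr => n _; rewrite nth_mkseq.
under eq_bigr do rewrite Kc_a.
rewrite c_a; have [a0|a_neq0] := eqVneq (\sum_(n < size a) abs2 a`_n) 0.
  have an0 := psumr_eq0P (fun (n : 'I_(size a)) _ => abs2_ge0 a`_n) a0.
  rewrite a0 big1 // => m _; rewrite big1 ?abs2_0 // => n _.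
  by rewrite (abs2_eq0 (an0 n isT)) mulr0.
have trace_a := cvg_trace_rank1 a_neq0.
have diag_ge0 m : 0 <= complex.Re (Q (rank1 a a) m m).
  exact: le_trans (abs2_ge0 _) (kraus_diag_le a alpha m).
apply: le_trans (_ : series (fun m => complex.Re (Q (rank1 a a) m m)) M <= _).
  by apply: ler_sum => m _; exact: kraus_diag_le.
rewrite -(cvg_lim _ trace_a) //.
exact: series_le_lim_ge0 diag_ge0 M (cvgP _ trace_a).
Qed.

End KrausTracePreserving.

Theorem corollary6p5 (R : realType)
  (e f : nat -> vec R)
  (Q : mat R -> mat R)
  (K : nat -> mat R) :
  is_ONB e -> is_ONB f ->
  (* Q is linear on D_e^2 *)
  (forall (N : nat) (c c' : mat R) (z : R[i]),
      supported N c -> supported N c' ->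
      Q (fun k l => c k l + z * c' k l) = (fun m n => Q c m n + z * Q c' m n)) ->
  (* Q is completely positive *)
  (forall (n : nat) (phi psi : 'I_n -> seq R[i]),
      0 <= \sum_(k < n) \sum_(l < n) sandw (Q (rank1 (phi k) (phi l))) (psi k) (psi l)) ->
  (* Q(rho) = sum_alpha K_alpha rho K_alpha^dagger *)
  (forall a a' g h : seq R[i],
      series (fun alpha => sandw (K alpha) g a * (sandw (K alpha) h a')^*) @ \oo
        --> sandw (Q (rank1 a a')) g h) ->
  (* Q is trace preserving *)
  (forall (N : nat) (c : mat R), supported N c ->
      exists T : op R, trace_class f T /\
        (forall m n, inner (f m) (T (f n)) = Q c m n) /\
        trace f T = \sum_(k < N) c k k) ->
  forall alpha : nat,
    exists B Bs : op R,
      is_bounded B /\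
      (forall m n, inner (f m) (B (e n)) = K alpha m n) /\
      is_adjoint B Bs /\
      (forall m n, inner (e n) (Bs (f m)) = (K alpha m n)^*).
Proof.
move=> [e_l2 [e_orth _]] [f_l2 [f_orth _]] _ _ kraus trace_preserving alpha.
have K_bounded := kraus_mx_bounded kraus trace_preserving alpha.
have Kd_bounded := mx_bounded_adjmx ler01 K_bounded.
have B_bounded := is_bounded_opmx e_l2 e_orth f_l2 f_orth ler01 K_bounded.
have B_entries := inner_opmx_basis e_orth f_l2 f_orth ler01 K_bounded.
have B_adjoint := is_adjoint_opmx e_l2 e_orth f_l2 f_orth ler01 K_bounded.
have Bs_entries := inner_opmx_basis f_orth e_l2 e_orth (sqr_ge0 (1 + 1)) Kd_bounded.
by exists (opmx e f (K alpha)), (opmx f e (adjmx (K alpha))).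
Qed.
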